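(* For any $n\ge0$, $1\le k\le n+2$ and $\varepsilon\in\{0,1\}$, the inclusion $\tau_n\sqcap^{n+2}_{k,\varepsilon}\hookrightarrow\tau_n\square^{n+2}_{k,\varepsilon}$ is a comical map.
   Context: Cubical sets are presheaves on the box category $\square$ (objects $[1]^n=\{0<1\}^n$; morphisms generated by faces $\partial_{i,\varepsilon}$ inserting $\varepsilon$ in coordinate $i$, degeneracies $\sigma_i$, and max/min connections $\gamma_{i,1},\gamma_{i,0}$); a cube is degenerate if it is $x\sigma_i$ or $x\gamma_{i,\varepsilon}$; every composite of faces has a unique normal form $\partial_{k_1,\varepsilon_1}\cdots\partial_{k_t,\varepsilon_t}$ with $k_1>\dots>k_t$. A marked cubical set is a cubical set with marked cubes of positive dimension containing all degenerate cubes; maps preserve marked cubes; category $\mathsf{cSet}^+$; colimits are computed on underlying cubical sets, a cube being marked iff it is the image of a marked cube. $\tau_jX$ is $X$ with additionally all cubes of dimension $\ge j+1$ marked. For $m\ge1$, $1\le k\le m$, $\varepsilon\in\{0,1\}$: $\square^m_{k,\varepsilon}$ is $\square^m$ in which a non-degenerate positive-dimensional face in normal form is marked iff none of its factors is $\partial_{k-1,\varepsilon},\partial_{k,0},\partial_{k,1},\partial_{k+1,\varepsilon}$; $\sqcap^m_{k,\varepsilon}$ is the union of all codimension-one faces except $\partial_{k,\varepsilon}$, with the marking making it a regular subobject of $\square^m_{k,\varepsilon}$ (comical open box inclusion). For $m\ge2$, $(\square^m_{k,\varepsilon})''=\tau_{m-2}\square^m_{k,\varepsilon}$ and $(\square^m_{k,\varepsilon})'$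 is $\square^m_{k,\varepsilon}$ with all $(m-1)$-faces other than $\partial_{k,\varepsilon}$ marked (elementary comical marking extension $(\square^m_{k,\varepsilon})'\hookrightarrow(\square^m_{k,\varepsilon})''$). A map is comical if it lies in the closure of the comical open box inclusions and elementary comical marking extensions under pushouts and transfinite composition. *)

From Stdlib Require Import FunctionalExtensionality ProofIrrelevance.
From mathcomp Require Import ssreflect ssrfun ssrbool eqtype ssrnat seq fintype tuple.

Set Implicit Arguments.
Unset Strict Implicit.
Unset Printing Implicit Defensive.

(* The box category with connections, as a subcategory of posets.      *)
(* The object [1]^n is represented by its set of points cube n.         *)
(* All indices below are 1-based, as in the paper.                      *)

Definition cube (n : nat) := n.-tuple bool.

Definition ins_seq (i : nat) (e : bool) (s : seq bool) :=
  take i.-1 s ++ e :: drop i.-1 s.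
Definition del_seq (i : nat) (s : seq bool) := take i.-1 s ++ drop i s.
Definition con_seq (i : nat) (e : bool) (s : seq bool) :=
  take i.-1 s ++
  (if e then nth false s i.-1 || nth false s i
        else nth false s i.-1 && nth false s i) :: drop i.+1 s.

Definition face n (i : nat) (e : bool) (v : cube n) : cube n.+1 :=
  [tuple nth false (ins_seq i e v) j | j < n.+1].
Definition degen n (i : nat) (v : cube n.+1) : cube n :=
  [tuple nth false (del_seq i v) j | j < n].
Definition conn n (i : nat) (e : bool) (v : cube n.+2) : cube n.+1 :=
  [tuple nth false (con_seq i e v) j | j < n.+1].

Arguments face : clear implicits.
Arguments degen : clear implicits.
Arguments conn : clear implicits.

Inductive boxmap : forall m n : nat, (cube m -> cube n) -> Prop :=
| bm_id n : boxmap (fun v : cube n => v)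
| bm_face n i e : 0 < i <= n.+1 -> boxmap (face n i e)
| bm_degen n i : 0 < i <= n.+1 -> boxmap (degen n i)
| bm_conn n i e : 0 < i <= n.+1 -> boxmap (conn n i e)
| bm_comp m n p (f : cube m -> cube n) (g : cube n -> cube p) :
    boxmap f -> boxmap g -> boxmap (fun v => g (f v))
| bm_ext m n (f g : cube m -> cube n) : boxmap f -> f =1 g -> boxmap g.
Arguments boxmap {m n} f.

Inductive degen_gen : forall m n : nat, (cube m -> cube n) -> Prop :=
| dg_sigma n i : 0 < i <= n.+1 -> degen_gen (degen n i)
| dg_gamma n i e : 0 < i <= n.+1 -> degen_gen (conn n i e).
Arguments degen_gen {m n} f.

(* composites of faces in normal form d_{k1,e1} ... d_{kt,et},
   k1 > ... > kt (functional composition: d_{kt,et} is applied first) *)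
Inductive face_nf : forall n m : nat, (cube n -> cube m) -> seq (nat * bool) -> Prop :=
| fnf_nil n : face_nf (fun v : cube n => v) [::]
| fnf_cons n m (f : cube n -> cube m) l k e :
    face_nf f l -> 0 < k <= m.+1 -> all (fun q => q.1 < k) l ->
    face_nf (fun v => face m k e (f v)) ((k, e) :: l).
Arguments face_nf {n m} f l.

(* Cubical sets and marked cubical sets                                *)

(* presheaves on the box category; x . f written  act pf x *)
Record cSet := CSet {
  cell : nat -> Type;
  act : forall m n (f : cube m -> cube n), boxmap f -> cell n -> cell m;
  act_id : forall n (p : boxmap (fun v : cube n => v)) x, act p x = x;
  act_comp : forall m n q (f : cube m -> cube n) (g : cube n -> cube q)
      (pf : boxmap f) (pg : boxmap g) (pgf : boxmap (fun v => g (f v))) x,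
      act pgf x = act pf (act pg x);
  act_ext : forall m n (f g : cube m -> cube n) (pf : boxmap f) (pg : boxmap g) x,
      f =1 g -> act pf x = act pg x }.
Arguments act {c m n f} _ _.

Definition degenerate (X : cSet) n (x : cell X n) : Prop :=
  exists m (f : cube n -> cube m) (pf : boxmap f) (y : cell X m),
    degen_gen f /\ x = act pf y.

Lemma degen_gen_pos m n (f : cube m -> cube n) : degen_gen f -> 0 < m.
Proof. by case. Qed.

Lemma degenerate_pos (X : cSet) n (x : cell X n) : degenerate x -> 0 < n.
Proof. by case=> m [f [pf [y [H _]]]]; exact: degen_gen_pos H. Qed.

Record mcSet := MCSet {
  ucs :> cSet;
  marked : forall n, cell ucs n -> Prop;
  marked_pos : forall n (x : cell ucs n), marked x -> 0 < n;
  degen_marked : forall n (x : cell ucs n), degenerate x -> marked x }.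
Arguments marked {_ n} _.

Record mmap (X Y : mcSet) := MMap {
  mapc : forall n, cell X n -> cell Y n;
  mapc_nat : forall m n (f : cube m -> cube n) (pf : boxmap f) (x : cell X n),
      mapc (act pf x) = act pf (mapc x);
  mapc_mark : forall n (x : cell X n), marked x -> marked (mapc x) }.
Arguments mapc {X Y} _ {n} _.

Definition mid (X : mcSet) : mmap X X.
Proof. by apply: (@MMap X X (fun n x => x)). Defined.

Definition mcomp (X Y Z : mcSet) (g : mmap Y Z) (f : mmap X Y) : mmap X Z.
Proof.
apply: (@MMap X Z (fun n x => mapc g (mapc f x))).
- by move=> m n h ph x; rewrite !mapc_nat.
- by move=> n x Hx; do 2 apply: mapc_mark.
Defined.

Definition meq (X Y : mcSet) (f g : mmap X Y) : Prop :=
  forall n (x : cell X n), mapc f x = mapc g x.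

Definition is_pushout (A B C D : mcSet) (f : mmap A B) (g : mmap A C)
    (g' : mmap B D) (f' : mmap C D) : Prop :=
  meq (mcomp g' f) (mcomp f' g) /\
  forall (Z : mcSet) (u : mmap B Z) (v : mmap C Z),
    meq (mcomp u f) (mcomp v g) ->
    exists h : mmap D Z,
      [/\ meq (mcomp h g') u, meq (mcomp h f') v &
          (forall h' : mmap D Z,
            meq (mcomp h' g') u -> meq (mcomp h' f') v -> meq h' h)].

Definition lt_of (I : Type) (le : I -> I -> Prop) (a b : I) := le a b /\ a <> b.

Definition is_wellorder (I : Type) (le : I -> I -> Prop) (bot : I) : Prop :=
  (forall a, le a a) /\
  [/\ (forall a b c, le a b -> le b c -> le a c),
      (forall a b, le a b -> le b a -> a = b),
      (forall a b, le a b \/ le b a),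
      well_founded (lt_of le) & (forall a, le bot a)].

Definition is_functor (I : Type) (le : I -> I -> Prop) (X : I -> mcSet)
    (x : forall a b, le a b -> mmap (X a) (X b)) : Prop :=
  (forall a (h : le a a), meq (x a a h) (mid (X a))) /\
  (forall a b c (hab : le a b) (hbc : le b c) (hac : le a c),
      meq (mcomp (x b c hbc) (x a b hab)) (x a c hac)).

Definition is_colimit (I : Type) (J : I -> Prop) (le : I -> I -> Prop)
    (X : I -> mcSet) (x : forall a b, le a b -> mmap (X a) (X b))
    (Y : mcSet) (c : forall a, J a -> mmap (X a) Y) : Prop :=
  (forall a b (ja : J a) (jb : J b) (h : le a b),
      meq (mcomp (c b jb) (x a b h)) (c a ja)) /\
  forall (Z : mcSet) (z : forall a, J a -> mmap (X a) Z),
    (forall a b (ja : J a) (jb : J b) (h : le a b),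
        meq (mcomp (z b jb) (x a b h)) (z a ja)) ->
    exists u : mmap Y Z,
      (forall a (ja : J a), meq (mcomp u (c a ja)) (z a ja)) /\
      forall u' : mmap Y Z,
        (forall a (ja : J a), meq (mcomp u' (c a ja)) (z a ja)) -> meq u' u.

Arguments is_colimit {I} J {le X} x Y c.

Definition is_limit_elt (I : Type) (le : I -> I -> Prop) (bot b : I) : Prop :=
  b <> bot /\ forall a, lt_of le a b -> exists c, lt_of le a c /\ lt_of le c b.

Definition is_succ_of (I : Type) (le : I -> I -> Prop) (a b : I) : Prop :=
  lt_of le a b /\ forall c, lt_of le a c -> le b c.

Definition is_cocontinuous (I : Type) (le : I -> I -> Prop) (bot : I)
    (X : I -> mcSet) (x : forall a b, le a b -> mmap (X a) (X b)) : Prop :=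
  forall b, is_limit_elt le bot b ->
    is_colimit (fun a => lt_of le a b) x (X b)
               (fun a (ja : lt_of le a b) => x a b (proj1 ja)).

(* The standard cubes, comical cubes, open boxes, markings             *)

Lemma sig_eqP (A : Type) (P : A -> Prop) (a b : {x : A | P x}) :
  proj1_sig a = proj1_sig b -> a = b.
Proof.
case: a => a pa; case: b => b pb /= Hab; subst b.
by rewrite (proof_irrelevance _ pa pb).
Qed.

Definition rep_cell (m n : nat) := {f : cube n -> cube m | boxmap f}.

Definition rep_act (m : nat) m' n' (g : cube m' -> cube n') (pg : boxmap g)
    (x : rep_cell m n') : rep_cell m m' :=
  exist (fun h => boxmap h) (fun v => proj1_sig x (g v)) (bm_comp pg (proj2_sig x)).

Definition rep (m : nat) : cSet.
Proof.
apply: (@CSet (rep_cell m) (@rep_act m)).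
- by move=> n p x; apply: sig_eqP.
- by move=> m' n q f g pf pg pgf x; apply: sig_eqP.
- move=> m' n f g pf pg x Hfg; apply: sig_eqP => /=.
  by apply: functional_extensionality => v; rewrite Hfg.
Defined.

Definition forbidden (k : nat) (e : bool) (q : nat * bool) : bool :=
  [|| (q.1 == k.-1) && (q.2 == e), q.1 == k | (q.1 == k.+1) && (q.2 == e)].

(* marking of  box^m_{k,e}: the degenerate cubes, and the non-degenerate
   positive-dimensional faces whose normal form has no forbidden factor
   (the top cube, with empty normal form, is marked) *)
Definition comb_mark (m k : nat) (e : bool) n (x : cell (rep m) n) : Prop :=
  degenerate x \/
  (0 < n /\ exists (g : cube n -> cube m) (l : seq (nat * bool)),
      [/\ face_nf g l, proj1_sig x =1 g & all (fun q => ~~ forbidden k e q) l]).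

Arguments comb_mark m k e {n} x.

Lemma comb_mark_pos m k e n (x : cell (rep m) n) : comb_mark m k e x -> 0 < n.
Proof. by case=> [/degenerate_pos|[]]. Qed.

Definition comb (m k : nat) (e : bool) : mcSet :=
  @MCSet (rep m) (@comb_mark m k e) (@comb_mark_pos m k e)
         (fun n x H => or_introl H).

(* the open box sqcap^{p+1}_{k,e}: union of the codimension-one faces of
   box^{p+1} other than d_{k,e}, i.e. the cubes factoring through some
   d_{i,d} : box^p -> box^{p+1} with (i,d) <> (k,e) *)
Definition in_open (p k : nat) (e : bool) n (f : cube n -> cube p.+1) : Prop :=
  exists (i : nat) (d : bool) (g : cube n -> cube p),
    [/\ 0 < i <= p.+1, (i, d) != (k, e), boxmap g & f =1 (fun v => face p i d (g v))].

Arguments in_open p k e {n} f.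

Definition open_cell (p k : nat) (e : bool) (n : nat) :=
  {f : cube n -> cube p.+1 | boxmap f /\ in_open p k e f}.

Lemma in_open_act p k e m n (g : cube m -> cube n) (pg : boxmap g)
    (f : cube n -> cube p.+1) :
  boxmap f /\ in_open p k e f ->
  boxmap (fun v => f (g v)) /\ in_open p k e (fun v => f (g v)).
Proof.
case=> bf [i [d [h [Hi Hid bh Hf]]]]; split; first exact: bm_comp.
exists i, d, (fun v => h (g v)); split=> //; first exact: bm_comp.
Qed.

Definition open_act (p k : nat) (e : bool) m n (g : cube m -> cube n)
    (pg : boxmap g) (x : open_cell p k e n) : open_cell p k e m :=
  exist _ (fun v => proj1_sig x (g v)) (in_open_act pg (proj2_sig x)).

Definition open_cs (p k : nat) (e : bool) : cSet.
Proof.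
apply: (@CSet (open_cell p k e) (@open_act p k e)).
- by move=> n q x; apply: sig_eqP.
- by move=> m' n q f g pf pg pgf x; apply: sig_eqP.
- move=> m' n f g pf pg x Hfg; apply: sig_eqP => /=.
  by apply: functional_extensionality => v; rewrite Hfg.
Defined.

Definition open_inc (p k : nat) (e : bool) n (x : open_cell p k e n) : cell (rep p.+1) n :=
  exist (fun h => boxmap h) (proj1_sig x) (proj1 (proj2_sig x)).
Arguments open_inc p k e {n} x.

(* regular subobject: a cube is marked iff it is marked in box^{p+1}_{k,e} *)
Definition open_mark (p k : nat) (e : bool) n (x : cell (open_cs p k e) n) : Prop :=
  comb_mark p.+1 k e (open_inc p k e x).
Arguments open_mark p k e {n} x.

Lemma open_mark_pos p k e n (x : cell (open_cs p k e) n) : open_mark p k e x -> 0 < n.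
Proof. exact: comb_mark_pos. Qed.

Lemma open_degen_marked p k e n (x : cell (open_cs p k e) n) :
  degenerate x -> open_mark p k e x.
Proof.
case=> m [f [pf [y [Hf ->]]]]; left.
exists m, f, pf, (open_inc p k e y); split=> //.
by apply: sig_eqP.
Qed.

Definition openbox (p k : nat) (e : bool) : mcSet :=
  @MCSet (open_cs p k e) (@open_mark p k e) (@open_mark_pos p k e)
         (@open_degen_marked p k e).

Definition open_incl (p k : nat) (e : bool) : mmap (openbox p k e) (comb p.+1 k e).
Proof.
apply: (@MMap (openbox p k e) (comb p.+1 k e) (@open_inc p k e)).
- by move=> m n f pf x; apply: sig_eqP.
- by move=> n x.
Defined.

Definition tau (j : nat) (X : mcSet) : mcSet.
Proof.
apply: (@MCSet X (fun n x => marked x \/ j < n)).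
- by move=> n x [/marked_pos|/(leq_ltn_trans (leq0n j))].
- by move=> n x H; left; apply: degen_marked.
Defined.

Definition tau_map (j : nat) (X Y : mcSet) (f : mmap X Y) : mmap (tau j X) (tau j Y).
Proof.
apply: (@MMap (tau j X) (tau j Y) (fun n x => mapc f x)).
- by move=> m n g pg x; exact: (mapc_nat f pg x).
- by move=> n x [H|H]; [left; apply: mapc_mark|right].
Defined.

Definition prime_mark (p k : nat) (e : bool) n (x : cell (rep p.+2) n) : Prop :=
  comb_mark p.+2 k e x \/
  (n = p.+1 /\ exists (g : cube n -> cube p.+2) (i : nat) (d : bool),
      [/\ face_nf g [:: (i, d)], proj1_sig x =1 g & (i, d) != (k, e)]).

Arguments prime_mark p k e {n} x.

Lemma prime_mark_pos p k e n (x : cell (rep p.+2) n) : prime_mark p k e x -> 0 < n.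
Proof. case=> [/comb_mark_pos //|[Hn _]]; by rewrite Hn. Qed.

Definition comb' (p k : nat) (e : bool) : mcSet :=
  @MCSet (rep p.+2) (@prime_mark p k e) (@prime_mark_pos p k e)
         (fun n x H => or_introl (or_introl H)).

Definition comb'' (p k : nat) (e : bool) : mcSet := tau p (comb p.+2 k e).

Definition mark_incl (p k : nat) (e : bool) : mmap (comb' p k e) (comb'' p k e).
Proof.
apply: (@MMap (comb' p k e) (comb'' p k e) (fun n x => x)).
- by [].
- move=> n x [H|[Hn _]]; [by left|right; by rewrite Hn].
Defined.

Inductive comical : forall X Y : mcSet, mmap X Y -> Prop :=
| cm_open (p k : nat) (e : bool) :
    0 < k <= p.+1 -> comical (open_incl p k e)
| cm_mark (p k : nat) (e : bool) :
    0 < k <= p.+2 -> comical (mark_incl p k e)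
| cm_pushout (A B C D : mcSet) (f : mmap A B) (g : mmap A C)
    (g' : mmap B D) (f' : mmap C D) :
    comical f -> is_pushout f g g' f' -> comical f'
| cm_transfinite (I : Type) (le : I -> I -> Prop) (bot : I)
    (X : I -> mcSet) (x : forall a b, le a b -> mmap (X a) (X b))
    (Y : mcSet) (c : forall a, mmap (X a) Y) :
    is_wellorder le bot -> is_functor x -> is_cocontinuous bot x ->
    is_colimit (fun _ => True) x Y (fun a _ => c a) ->
    (forall a b (h : le a b), is_succ_of le a b -> comical (x a b h)) ->
    comical (c bot).

(* The inclusion factors through D, the cube box^{n+2}_{k,e} in which the
   cubes of dimension > n of the open box are additionally marked:
     tau_n sqcap  -->  D  -->  tau_n box = (box^{n+2}_{k,e})''.
   - The first map is a pushout of the comical open box inclusion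
     sqcap -> box along sqcap -> tau_n sqcap; in general, the pushout of any
     f : A -> B along A -> tau_j A marks the images of the cubes of
     dimension > j in B ([pushout_mark_image]).
   - The second map is a pushout of the elementary marking extension
     (box)' -> (box)'' along (box)' -> D, because (box)' -> D is the identity
     on cubes: the codimension-one faces other than d_{k,e} lie in the open
     box.  A square whose vertical map is surjective on cubes and whose right
     map is an identity is always a pushout ([pushout_surjective]).
   Comical maps are closed under composition (a transfinite composite
   indexed by the three-element chain, [comical_comp]) and under equality of
   maps ([comical_meq]); this yields the theorem. *)

From Stdlib Require Import Program.Equality Wf_nat.
From mathcomp Require Import ssreflect ssrfun ssrbool eqtype ssrnat seq.

Set Implicit Arguments.
Unset Strict Implicit.
Unset Printing Implicit Defensive.

(* A commutative square whose left map g is surjective on cubes and whose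
   right map is the identity is a pushout: any cocone is determined by its
   component on B, and surjectivity of g forces the compatibility on C. *)
Lemma pushout_surjective (A B C : mcSet) (f : mmap A B) (g : mmap A C)
    (f' : mmap C B) :
  (forall n (c : cell C n), exists a : cell A n, mapc g a = c) ->
  meq f (mcomp f' g) -> is_pushout f g (mid B) f'.
Proof.
move=> g_onto f_eq; split=> // Z u v uf_vg.
exists u; split=> // n c.
have [a <-] := g_onto n c.
by have := uf_vg n a; rewrite /= (f_eq n a).
Qed.

Lemma comical_meq (A B : mcSet) (f f' : mmap A B) :
  comical f -> meq f f' -> comical f'.
Proof.
move=> cf ff'; apply: (cm_pushout cf (pushout_surjective (g := mid A) _ _)).
- by move=> n a; exists a.
- exact: ff'.
Qed.

Section MarkImage.
Variables (j : nat) (A B : mcSet) (f : mmap A B).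

Definition mark_image_mark n (y : cell B n) : Prop :=
  marked y \/ (j < n /\ exists x : cell A n, mapc f x = y).

Lemma mark_image_mark_pos n (y : cell B n) : mark_image_mark y -> 0 < n.
Proof. by case=> [/marked_pos|[/(leq_ltn_trans (leq0n j))]]. Qed.

Definition mark_image : mcSet :=
  @MCSet B mark_image_mark mark_image_mark_pos
         (fun n y H => or_introl (degen_marked H)).

Definition tau_unit : mmap A (tau j A) :=
  @MMap A (tau j A) (fun n x => x) (fun _ _ _ _ _ => erefl)
        (fun n x H => or_introl H).

Definition mark_image_in : mmap B mark_image :=
  @MMap B mark_image (fun n y => y) (fun _ _ _ _ _ => erefl)
        (fun n y H => or_introl H).

Definition mark_image_map : mmap (tau j A) mark_image.
Proof.
apply: (@MMap (tau j A) mark_image (fun n x => mapc f x)).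
- by move=> m n g pg x; exact: (mapc_nat f pg x).
- move=> n x [Hx|Hn]; first by left; apply: mapc_mark.
  by right; split=> //; exists x.
Defined.

(* mark_image is the pushout of f along A -> tau_j A: a cocone (u, v) is
   given by u, which sends the newly marked cubes f x to the marked v x. *)
Lemma pushout_mark_image :
  is_pushout f tau_unit mark_image_in mark_image_map.
Proof.
split=> // Z u v uf_v.
have u_mark n (y : cell mark_image n) : marked y -> marked (mapc u y).
  case=> [Hy|[Hn [x <-]]]; first exact: mapc_mark.
  by have /= -> := uf_v n x; apply: mapc_mark; right.
exists (@MMap mark_image Z (fun n y => mapc u y)
          (fun _ _ _ pg y => mapc_nat u pg y) u_mark).
by split=> // h' h'u _ n y; apply: h'u.
Qed.

End MarkImage.

(* The three-element chain 0 < 1 < 2, indexing binary composites. *)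
Inductive three := T0 | T1 | T2.

Definition rank3 (a : three) : nat :=
  match a with T0 => 0 | T1 => 1 | T2 => 2 end.

Definition le3 (a b : three) : Prop := rank3 a <= rank3 b.

Lemma lt3_rank (a b : three) : lt_of le3 a b -> rank3 a < rank3 b.
Proof. by case: a; case: b; rewrite /lt_of /le3 //= => -[]. Qed.

Lemma le3_wellorder : is_wellorder le3 T0.
Proof.
split=> [a|]; first exact: leqnn.
split=> [a b c|a b|a b||a]; rewrite /le3.
- exact: leq_trans.
- by case: a; case: b.
- by case: a; case: b; [left|left|left|right|left|left|right|right|left].
- apply: (well_founded_lt_compat _ rank3) => a b /lt3_rank; exact/ltP.
- by case: a.
Qed.

(* Every element of the chain is the bottom or a successor, so cocontinuity
   of functors on it is vacuous. *)
Lemma three_no_limit (b : three) : ~ is_limit_elt le3 T0 b.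
Proof.
have no_between a c : rank3 c = (rank3 a).+1 ->
    ~ exists d, lt_of le3 a d /\ lt_of le3 d c.
  move=> Hc [d [/lt3_rank Had /lt3_rank]]; rewrite Hc => Hdc.
  by have := leq_ltn_trans Had Hdc; rewrite ltnn.
case: b => -[b_ne0 between] //.
- by apply: (no_between T0 T1) => //; apply: between; split.
- by apply: (no_between T1 T2) => //; apply: between; split.
Qed.

Section Composition.
Variables (X Y Z : mcSet) (f : mmap X Y) (g : mmap Y Z).

Definition chain_obj (a : three) : mcSet :=
  match a with T0 => X | T1 => Y | T2 => Z end.

Definition chain_map (a b : three) : le3 a b -> mmap (chain_obj a) (chain_obj b) :=
  match a as a', b as b' return le3 a' b' -> mmap (chain_obj a') (chain_obj b') with
  | T0, T0 => fun _ => mid X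
  | T0, T1 => fun _ => f
  | T0, T2 => fun _ => mcomp g f
  | T1, T1 => fun _ => mid Y
  | T1, T2 => fun _ => g
  | T2, T2 => fun _ => mid Z
  | T1, T0 | T2, T0 | T2, T1 => fun h => False_rect _ (Bool.diff_false_true h)
  end.

Definition chain_leg (a : three) : mmap (chain_obj a) Z :=
  match a with T0 => mcomp g f | T1 => g | T2 => mid Z end.

Lemma chain_functor : is_functor chain_map.
Proof. by split; [case | case; case; case]. Qed.

Lemma chain_cocontinuous : is_cocontinuous T0 chain_map.
Proof. by move=> b /three_no_limit. Qed.

(* the chain has a top element, which is therefore its colimit *)
Lemma chain_colimit :
  is_colimit (fun _ => True) chain_map Z (fun a _ => chain_leg a).
Proof.
split; first by case; case.
move=> W w w_cocone; exists (w T2 I); split.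
- by case=> -[] n x //=; [apply: (w_cocone T0 T2) | apply: (w_cocone T1 T2)].
- by move=> u' u'_leg n x; apply: (u'_leg T2 I).
Qed.

Hypotheses (comical_f : comical f) (comical_g : comical g).

Lemma chain_succ_comical (a b : three) (h : le3 a b) :
  is_succ_of le3 a b -> comical (chain_map h).
Proof.
case=> -[_ a_ne_b] a_succ.
have lt01 : lt_of le3 T0 T1 by split.
case: a b h a_ne_b a_succ => -[] h a_ne_b a_succ //=; try by case: a_ne_b.
by have := a_succ T1 lt01.
Qed.

Lemma comical_comp : comical (mcomp g f).
Proof.
exact: (cm_transfinite le3_wellorder chain_functor chain_cocontinuous
          chain_colimit chain_succ_comical).
Qed.

End Composition.

Lemma face_nf_boxmap a b (g : cube a -> cube b) l : face_nf g l -> boxmap g.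
Proof.
elim=> [m|m m' f' l' k' e' _ IH Hk _]; first exact: bm_id.
by apply: bm_comp; [exact: IH | exact: bm_face].
Qed.

Lemma face_nf_single a c (g : cube a -> cube c.+1) i d :
  face_nf g [:: (i, d)] ->
  exists h : cube a -> cube c,
    [/\ boxmap h, 0 < i <= c.+1 & g =1 (fun v => face c i d (h v))].
Proof.
move=> H; dependent destruction H.
by exists f; split=> //; exact: face_nf_boxmap H.
Qed.

Section ComicalCube.
Variables (n k : nat) (e : bool).

(* D: box^{n+2}_{k,e} with the cubes of dimension > n of the open box
   sqcap^{n+2}_{k,e} additionally marked *)
Definition comb_open : mcSet := mark_image n (open_incl n.+1 k e).

(* The codimension-one faces other than d_{k,e} belong to the open box, so
   the marking of (box^{n+2}_{k,e})' is contained in that of D. *)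
Lemma prime_mark_comb_open m (x : cell (rep n.+2) m) :
  prime_mark n k e x -> marked (x : cell comb_open m).
Proof.
case=> [Hx|[Hm [g [i [d [Hg Hxg Hid]]]]]]; first by left.
have [h [bh Hi Hgh]] := face_nf_single Hg.
have x_open : boxmap (proj1_sig x) /\ in_open n.+1 k e (proj1_sig x).
  by split; [exact: proj2_sig x | exists i, d, h; split=> // v; rewrite Hxg Hgh].
right; split; first by rewrite Hm.
exists (exist _ (proj1_sig x) x_open).
exact: sig_eqP.
Qed.

Definition prime_to_comb_open : mmap (comb' n k e) comb_open :=
  @MMap (comb' n k e) comb_open (fun m x => x) (fun _ _ _ _ _ => erefl)
        prime_mark_comb_open.

Definition comb_open_to_tau : mmap comb_open (comb'' n k e).
Proof.
apply: (@MMap comb_open (comb'' n k e) (fun m x => x)) => // m x.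
by case=> [Hx|[Hm _]]; [left|right].
Defined.

Hypothesis k_range : 0 < k <= n.+2.

Lemma comical_to_comb_open : comical (mark_image_map n (open_incl n.+1 k e)).
Proof. exact: (cm_pushout (cm_open e k_range) (pushout_mark_image _ _)). Qed.

Lemma comical_comb_open_to_tau : comical comb_open_to_tau.
Proof.
apply: (cm_pushout (cm_mark e k_range)
          (pushout_surjective (g := prime_to_comb_open) _ _)) => // m x.
by exists x.
Qed.

End ComicalCube.

Theorem lemma3p7 (n k : nat) (e : bool) :
  0 < k <= n.+2 ->
  comical (tau_map n (open_incl n.+1 k e)).
Proof.
move=> k_range.
apply: (comical_meq (f := mcomp (comb_open_to_tau n k e)
                                 (mark_image_map n (open_incl n.+1 k e)))) => //.
exact: comical_comp (comical_to_comb_open e k_range)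
                    (comical_comb_open_to_tau e k_range).
Qed.
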